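(* With $\varepsilon,N,q,P_{(0)},d$ as in the context, assume $0<1-4d^2<1$ and let $\eta>0$ satisfy $\tanh\eta=\sqrt{1-4d^2}$. For real $\theta$ set $$w(\theta)=\frac{\sinh(\eta-\theta)}{\sinh(\eta+\theta)}-1,\qquad \hat R(\theta)=I+w(\theta)P_{(0)}.$$ Then for all real $\theta,\theta'$ with $\eta+\theta,\eta+\theta',\eta+\theta+\theta'\neq0$, $$\hat R_{12}(\theta)\hat R_{23}(\theta+\theta')\hat R_{12}(\theta')=\hat R_{23}(\theta')\hat R_{12}(\theta+\theta')\hat R_{23}(\theta),$$ and $\hat R(\theta)\hat R(-\theta)=I$ whenever both sides are defined. Equivalently, $w$ satisfies $w(\theta+\theta')=\frac{w(\theta)+w(\theta')+w(\theta)w(\theta')}{1-d^2w(\theta)w(\theta')}$.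
   Context: Let $\varepsilon\in\{1,-1\}$, $N\ge 2$ (with $N=2n$ even if $\varepsilon=-1$), $q>0$, $[x]=(q^x-q^{-x})/(q-q^{-1})$ ($[x]=x$ if $q=1$). Define $\rho=(n-\tfrac12,\dots,\tfrac12,0,-\tfrac12,\dots,-n+\tfrac12)$ if $\varepsilon=1,N=2n+1$; $\rho=(n-1,\dots,1,0,0,-1,\dots,-n+1)$ if $\varepsilon=1,N=2n$; $\rho=(n,\dots,1,-1,\dots,-n)$ if $\varepsilon=-1,N=2n$. Let $\epsilon_i=1$ for all $i$ if $\varepsilon=1$; $\epsilon_i=1$ for $i\le n$ and $-1$ for $i>n$ if $\varepsilon=-1$. With $i'=N+1-i$ and matrix units $E_{ij}$, $P_{(0)}=(1+\varepsilon[N-\varepsilon])^{-1}\sum_{i,j}q^{\rho_i-\rho_j}\epsilon_i\epsilon_jE_{i',j}\otimes E_{i,j'}$ on $\mathbb C^N\otimes\mathbb C^N$; $1+\varepsilon[N-\varepsilon]\neq0$ is assumed and $d=(1+\varepsilon[N-\varepsilon])^{-1}$. $A_{12}=A\otimes I$, $A_{23}=I\otimes A$. *)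

From HB Require Import structures.
From mathcomp Require Import all_boot all_order all_algebra.
From mathcomp Require Import all_classical all_reals all_analysis.
From mathcomp Require Import mxtens.
Set Implicit Arguments. Unset Strict Implicit. Unset Printing Implicit Defensive.
Import Order.TTheory GRing.Theory Num.Theory.
Local Open Scope ring_scope.

Definition sinh {R : realType} (x : R) : R := (expR x - expR (- x)) / 2.
Definition cosh {R : realType} (x : R) : R := (expR x + expR (- x)) / 2.
Definition tanh {R : realType} (x : R) : R := sinh x / cosh x.

Definition qnum {R : realType} (q x : R) : R :=
  if q == 1 then x else (powR q x - powR q (- x)) / (q - q^-1).

(* The sign eps is encoded as a boolean: symp = false <-> eps = 1,
   symp = true <-> eps = -1 (symplectic case, N = 2n even). *)
Definition epsR {R : realType} (symp : bool) : R := if symp then -1 else 1.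

(* rho_k for the 1-based index k (1 <= k <= N), n = N %/ 2. *)
Definition rho {R : realType} (symp : bool) (N k : nat) : R :=
  let n := (N %/ 2)%N in
  if symp then
    (* eps = -1, N = 2n : (n, ..., 1, -1, ..., -n) *)
    (if (k <= n)%N then n%:R + 1 - k%:R else n%:R - k%:R)
  else if odd N then
    (* eps = 1, N = 2n+1 : (n-1/2, ..., 1/2, 0, -1/2, ..., -n+1/2) *)
    (if (k <= n)%N then n%:R + 2^-1 - k%:R
     else if k == n.+1 then 0 else n%:R + 3 / 2 - k%:R)
  else
    (* eps = 1, N = 2n : (n-1, ..., 1, 0, 0, -1, ..., -n+1) *)
    (if (k <= n)%N then n%:R - k%:R else n%:R + 1 - k%:R).

Definition epsi {R : realType} (symp : bool) (N k : nat) : R :=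
  if symp then (if (k <= N %/ 2)%N then 1 else -1) else 1.

Definition dconst {R : realType} (symp : bool) (N : nat) (q : R) : R :=
  (1 + epsR symp * qnum q (N%:R - epsR symp))^-1.

(* P_(0) on C^N (x) C^N, as an (N*N) x (N*N) matrix (Kronecker convention
   of mxtens: index (i,j) |-> i*N + j).  Ordinal i : 'I_N stands for the
   1-based index i+1, so i' = N+1-i corresponds to rev_ord i. *)
Definition P0 {R : realType} (symp : bool) (N : nat) (q : R) : 'M[R]_(N * N) :=
  dconst symp N q *:
  \sum_(i < N) \sum_(j < N)
     (powR q (rho symp N i.+1 - rho symp N j.+1)
        * epsi symp N i.+1 * epsi symp N j.+1) *:
     ((delta_mx (rev_ord i) j : 'M[R]_N) *t (delta_mx i (rev_ord j) : 'M[R]_N)).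

Definition wfun {R : realType} (eta theta : R) : R :=
  sinh (eta - theta) / sinh (eta + theta) - 1.

Definition Rhat {R : realType} (symp : bool) (N : nat) (q eta theta : R)
  : 'M[R]_(N * N) := 1%:M + wfun eta theta *: P0 symp N q.

Definition op12 {R : realType} (N : nat) (A : 'M[R]_(N * N)) : 'M[R]_(N * N * N) :=
  A *t (1%:M : 'M[R]_N).
Definition op23 {R : realType} (N : nat) (A : 'M[R]_(N * N)) : 'M[R]_(N * N * N) :=
  castmx (mulnA N N N, mulnA N N N) ((1%:M : 'M[R]_N) *t A).

From HB Require Import structures.
From mathcomp Require Import all_boot all_order all_algebra.
From mathcomp Require Import all_classical all_reals all_analysis.
From mathcomp Require Import mxtens.
From mathcomp Require Import ring lra zify.
Set Implicit Arguments.
Unset Strict Implicit.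
Unset Printing Implicit Defensive.
Import Order.TTheory GRing.Theory Num.Theory.
Local Open Scope ring_scope.

(* Write P_(0) = d E with E = sum_ij a_i b_j E_(i',j) (x) E_(i,j'), where
   a_i = q^rho_i eps_i and b_j = q^-rho_j eps_j.  E is the rank-one map |u><v|
   for u = sum_i a_i e_i' (x) e_i and v = sum_j b_j e_j (x) e_j'; since
   a_i b_i = 1 it is a Temperley-Lieb generator, E_12 E_23 E_12 = E_12 and
   E_23 E_12 E_23 = E_23, and E^2 = <v,u> E where, because rho_i' = -rho_i,
   <v,u> = eps sum_i q^(2 rho_i) telescopes to 1 + eps [N - eps] = 1/d.  So
   P = P_(0) is idempotent with P_12 P_23 P_12 = d^2 P_12, and for such P the
   Yang-Baxter equation for I + w P reduces to the scalar identity
   w(t + t') = w(t) + w(t') + w(t) w(t') + d^2 w(t) w(t + t') w(t'), i.e. the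
   addition law of w.  In the variables e^(2 eta), e^(2 t) this law is a
   rational identity once d^2 = e^(2 eta) / (e^(2 eta) + 1)^2, which is what
   tanh eta = sqrt (1 - 4 d^2) says. *)

Section Hyperbolic.
Variable R : realType.

Lemma sinh_expR (x : R) : sinh x = (expR x ^+ 2 - 1) / (2 * expR x).
Proof. rewrite /sinh expRN; field; exact: lt0r_neq0 (expR_gt0 x). Qed.

Lemma tanh_expR (x : R) : tanh x = (expR x ^+ 2 - 1) / (expR x ^+ 2 + 1).
Proof.
rewrite /tanh sinh_expR /cosh expRN.
have ex_gt0 := expR_gt0 x; have sq_gt0 : 0 < expR x ^+ 2 + 1 by nra.
by field; rewrite !gt_eqF.
Qed.

Lemma expR_sqr_subr1_neq0 {x : R} : x != 0 -> expR x ^+ 2 - 1 != 0.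
Proof.
move=> x_neq0; rewrite -expRM_natl subr_eq0 -[X in _ != X]expR0.
by apply: contra x_neq0 => /eqP/expR_inj x0; apply/eqP; lra.
Qed.

Lemma sinh_neq0 {x : R} : x != 0 -> sinh x != 0.
Proof.
move=> x_neq0; rewrite sinh_expR mulf_neq0 ?expR_sqr_subr1_neq0 //.
by rewrite invr_neq0 // mulf_neq0 // lt0r_neq0 // expR_gt0.
Qed.

Lemma wfun_expR (eta t : R) : eta + t != 0 ->
  wfun eta t = (expR eta ^+ 2 + 1) * (1 - expR t ^+ 2)
               / (expR eta ^+ 2 * expR t ^+ 2 - 1).
Proof.
move=> eta_t_neq0; have := expR_sqr_subr1_neq0 eta_t_neq0.
rewrite /wfun !sinh_expR !expRD expRN !exprMn => den_neq0.
have := expR_gt0 eta; have := expR_gt0 t => t_gt0 eta_gt0.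
by field; rewrite exprMn den_neq0 !gt_eqF.
Qed.

Lemma sqr_of_tanh (eta d : R) : 0 <= 1 - 4 * d ^+ 2 ->
  tanh eta = Num.sqrt (1 - 4 * d ^+ 2) ->
  d ^+ 2 = expR eta ^+ 2 / (expR eta ^+ 2 + 1) ^+ 2.
Proof.
move=> disc_ge0 /(congr1 (fun x => x ^+ 2)); rewrite sqr_sqrtr // tanh_expR.
have ex_gt0 := expR_gt0 eta; have sq_gt0 : 0 < expR eta ^+ 2 + 1 by nra.
move=> tanh2; have -> : d ^+ 2 = (1 - (1 - 4 * d ^+ 2)) / 4 by field.
by rewrite -tanh2; field; rewrite gt_eqF.
Qed.

Lemma wfun_add (eta d t t' : R) : 0 < eta ->
  d ^+ 2 = expR eta ^+ 2 / (expR eta ^+ 2 + 1) ^+ 2 ->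
  eta + t != 0 -> eta + t' != 0 -> eta + t + t' != 0 ->
  (1 - d ^+ 2 * wfun eta t * wfun eta t' != 0) /\
  wfun eta (t + t') * (1 - d ^+ 2 * wfun eta t * wfun eta t')
    = wfun eta t + wfun eta t' + wfun eta t * wfun eta t'.
Proof.
move=> eta_gt0 -> nz_t nz_t' nz_tt'.
rewrite !wfun_expR ?addrA // expRD exprMn.
set E := expR eta ^+ 2; set T := expR t ^+ 2; set U := expR t' ^+ 2.
have nz_ET : E * T - 1 != 0 by rewrite -exprMn -expRD expR_sqr_subr1_neq0.
have nz_EU : E * U - 1 != 0 by rewrite -exprMn -expRD expR_sqr_subr1_neq0.
have nz_ETU : E * (T * U) - 1 != 0.
  by rewrite mulrA -!exprMn -!expRD expR_sqr_subr1_neq0.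
have nz_Em1 : E - 1 != 0 by rewrite /E expR_sqr_subr1_neq0 // gt_eqF.
have E_gt0 : 0 < E by rewrite exprn_gt0 // expR_gt0.
have nz_Ep1 : E + 1 != 0 by rewrite lt0r_neq0 // addr_gt0.
have den : 1 - E / (E + 1) ^+ 2 * ((E + 1) * (1 - T) / (E * T - 1))
             * ((E + 1) * (1 - U) / (E * U - 1))
           = (E - 1) * (E * (T * U) - 1) / ((E * T - 1) * (E * U - 1)).
  by field; rewrite nz_ET nz_EU nz_Ep1.
split; first by rewrite den !mulf_neq0 // invr_neq0 // mulf_neq0.
by rewrite den; field; rewrite nz_ET nz_EU nz_ETU.
Qed.

Lemma wfun_addN (eta t : R) : eta + t != 0 -> eta - t != 0 ->
  wfun eta t + wfun eta (- t) + wfun eta t * wfun eta (- t) = 0.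
Proof.
move=> /sinh_neq0 nz_p /sinh_neq0 nz_m.
by rewrite /wfun opprK; field; rewrite nz_p nz_m.
Qed.

End Hyperbolic.

Section Baxterization.
Variables (R : comPzRingType) (k : nat).
Implicit Types (A B : 'M[R]_k) (a b c : R).

Lemma mulmx_idem_add_scale A a c : A *m A = A ->
  (1%:M + a *: A) *m (1%:M + c *: A) = 1%:M + (a + c + a * c) *: A.
Proof.
move=> idemA; rewrite !(mulmxDl, mulmxDr, mul1mx, mulmx1).
rewrite -!(scalemxAl, scalemxAr) idemA scalerA.
by apply/matrixP => i j; rewrite !mxE; ring.
Qed.

(* The Temperley-Lieb relations [ABA = d2 A], [BAB = d2 B] reduce the
   Yang-Baxter equation for [1 + x A], [1 + x B] to one scalar equation. *)
Lemma yang_baxter_idem A B a b c d2 :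
  A *m A = A -> B *m B = B -> A *m B *m A = d2 *: A -> B *m A *m B = d2 *: B ->
  b = a + c + a * c + a * b * c * d2 ->
  (1%:M + a *: A) *m (1%:M + b *: B) *m (1%:M + c *: A)
  = (1%:M + c *: B) *m (1%:M + b *: A) *m (1%:M + a *: B).
Proof.
move=> idemA idemB ABA BAB b_eq.
rewrite !(mulmxDl, mulmxDr, mul1mx, mulmx1).
rewrite -!(scalemxAl, scalemxAr) !scalerA ?mulmxA idemA idemB ABA BAB !scalerA.
apply/matrixP => i j; rewrite !mxE; apply/eqP; rewrite -subr_eq0; apply/eqP.
transitivity ((b - (a + c + a * c + a * b * c * d2)) * (B i j - A i j)); first ring.
by rewrite -b_eq subrr mul0r.
Qed.

End Baxterization.

Section TensorProduct.
Variable R : comPzRingType.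

Lemma tensmx_suml m n p r (I : finType) (F : I -> 'M[R]_(m, n)) (B : 'M[R]_(p, r)) :
  (\sum_i F i) *t B = \sum_i (F i *t B).
Proof.
apply/matrixP => i j; rewrite !mxE summxE mulr_suml summxE.
by apply: eq_bigr => k _; rewrite !mxE.
Qed.

Lemma tensmx_sumr m n p r (I : finType) (A : 'M[R]_(m, n)) (F : I -> 'M[R]_(p, r)) :
  A *t (\sum_i F i) = \sum_i (A *t F i).
Proof.
apply/matrixP => i j; rewrite !mxE summxE mulr_sumr summxE.
by apply: eq_bigr => k _; rewrite !mxE.
Qed.

Lemma tensmx11 m n : (1%:M : 'M[R]_m) *t (1%:M : 'M[R]_n) = 1%:M.
Proof.
apply/matrixP => i j.
case: (mxtens_indexP i) => i1 i2; case: (mxtens_indexP j) => j1 j2.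
rewrite tensmxE !mxE (can_eq (@mxtens_indexK _ _)) xpair_eqE.
by case: (i1 == j1); case: (i2 == j2); rewrite ?mulr1 ?mulr0.
Qed.

Lemma tensmxA m n p m' n' p' (A : 'M[R]_(m, m')) (B : 'M[R]_(n, n'))
    (C : 'M[R]_(p, p')) :
  castmx (mulnA m n p, mulnA m' n' p') (A *t (B *t C)) = A *t B *t C.
Proof.
have cast_index a b c (i : 'I_a) (j : 'I_b) (k : 'I_c) :
    cast_ord (esym (mulnA a b c)) (mxtens_index (mxtens_index (i, j), k))
    = mxtens_index (i, mxtens_index (j, k)).
  by apply: val_inj => /=; rewrite mulnDl -mulnA addnA.
apply/matrixP => i j.
case: (mxtens_indexP i) => i12 i3; case: (mxtens_indexP i12) => i1 i2.
case: (mxtens_indexP j) => j12 j3; case: (mxtens_indexP j12) => j1 j2.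
by rewrite castmxE !cast_index !tensmxE mulrA.
Qed.

Lemma castmx_mulmx m m' (e : m = m') (A B : 'M[R]_m) :
  castmx (e, e) (A *m B) = castmx (e, e) A *m castmx (e, e) B.
Proof. by case: m' / e. Qed.

Lemma castmx1 m m' (e : m = m') : castmx (e, e) (1%:M : 'M[R]_m) = 1%:M.
Proof. by case: m' / e. Qed.

End TensorProduct.

Section LegOperators.
Variables (R : realType) (N : nat).
Implicit Types A B : 'M[R]_(N * N).
Local Notation I := (1%:M : 'M[R]_N).

Fact op12_is_linear : linear (@op12 R N).
Proof. by move=> a A B; apply/matrixP => i j; rewrite /op12 !mxE; ring. Qed.
HB.instance Definition _ :=
  GRing.isLinear.Build R _ _ _ (@op12 R N) op12_is_linear.

Fact op23_is_linear : linear (@op23 R N).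
Proof.
move=> a A B; apply/matrixP => i j.
by rewrite /op23 !(castmxE, mxE); ring.
Qed.
HB.instance Definition _ :=
  GRing.isLinear.Build R _ _ _ (@op23 R N) op23_is_linear.

Lemma op12_1 : op12 (1%:M : 'M[R]_(N * N)) = 1%:M.
Proof. exact: tensmx11. Qed.

Lemma op23_1 : op23 (1%:M : 'M[R]_(N * N)) = 1%:M.
Proof. by rewrite /op23 tensmx11 castmx1. Qed.

Lemma op12M A B : op12 (A *m B) = op12 A *m op12 B.
Proof. by rewrite /op12 tensmx_mul mulmx1. Qed.

Lemma op23M A B : op23 (A *m B) = op23 A *m op23 B.
Proof. by rewrite /op23 -castmx_mulmx tensmx_mul mulmx1. Qed.

Lemma op23_tensmx (A B : 'M[R]_N) : op23 (A *t B) = I *t A *t B.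
Proof. exact: tensmxA. Qed.

End LegOperators.

Section TemperleyLieb.
Variables (R : realType) (N : nat).
Variables a b : 'I_N -> R.
Local Notation delta i j := (delta_mx i j : 'M[R]_N).

Definition tl_gen : 'M[R]_(N * N) :=
  \sum_(i < N) \sum_(j < N) (a i * b j) *:
    (delta (rev_ord i) j *t delta i (rev_ord j)).

Definition tl_trace : R := \sum_(i < N) a i * b (rev_ord i).

(* [tl_gen] is the rank-one operator |u><v| with u = sum_i a_i e_i' (x) e_i
   and v = sum_j b_j e_j (x) e_j'; routing it through a basis vector
   [e_k0 (x) e_k0] factors it into the square matrices [tl_ket] and [tl_bra]. *)
Variable k0 : 'I_N.
Local Notation e0 := (delta k0 k0).

Definition tl_ket : 'M[R]_(N * N) :=
  \sum_(i < N) a i *: (delta (rev_ord i) k0 *t delta i k0).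
Definition tl_bra : 'M[R]_(N * N) :=
  \sum_(j < N) b j *: (delta k0 j *t delta k0 (rev_ord j)).

Lemma tl_ket_bra : tl_ket *m tl_bra = tl_gen.
Proof.
rewrite mulmx_suml; apply: eq_bigr => i _; rewrite mulmx_sumr; apply: eq_bigr => j _.
by rewrite -scalemxAl -scalemxAr scalerA tensmx_mul !mul_delta_mx.
Qed.

Lemma tl_bra_ket : tl_bra *m tl_ket = tl_trace *: (e0 *t e0).
Proof.
rewrite mulmx_suml; under eq_bigr => j _ do rewrite mulmx_sumr.
rewrite exchange_big scaler_suml; apply: eq_bigr => i _.
rewrite (big_only1 (rev_ord i)) //.
  by rewrite -scalemxAl -scalemxAr scalerA tensmx_mul rev_ordK !mul_delta_mx mulrC.
move=> j ji _; rewrite -scalemxAl -scalemxAr tensmx_mul.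
by rewrite [X in X *t _]mul_delta_mx_0 // tens0mx !scaler0.
Qed.

Lemma tl_ket_e0 : tl_ket *m (e0 *t e0) = tl_ket.
Proof.
rewrite mulmx_suml; apply: eq_bigr => i _.
by rewrite -scalemxAl tensmx_mul !mul_delta_mx.
Qed.

Hypothesis ab1 : forall i, a i * b i = 1.

Lemma tl_bra12_ket23 :
  op12 tl_bra *m op23 tl_ket = \sum_i (delta k0 i *t e0 *t delta i k0).
Proof.
rewrite /tl_bra /tl_ket [op12 _]linear_sum [op23 _]linear_sum mulmx_suml.
under eq_bigr => j _ do rewrite mulmx_sumr.
rewrite exchange_big; apply: eq_bigr => i _ /=.
rewrite (big_only1 i) // => [|j ji _].
  rewrite !linearZ /= op23_tensmx -scalemxAl scalerA ab1 scale1r.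
  by rewrite /op12 !tensmx_mul mulmx1 !mul1mx mul_delta_mx.
rewrite !linearZ /= op23_tensmx -scalemxAl /op12 !tensmx_mul.
by rewrite mul_delta_mx_0 ?(inj_eq rev_ord_inj) // tensmx0 tens0mx !scaler0.
Qed.

Lemma tl_bra23_ket12 :
  op23 tl_bra *m op12 tl_ket
  = \sum_i (delta (rev_ord i) k0 *t e0 *t delta k0 (rev_ord i)).
Proof.
rewrite /tl_bra /tl_ket [op12 _]linear_sum [op23 _]linear_sum mulmx_suml.
under eq_bigr => j _ do rewrite mulmx_sumr.
rewrite exchange_big; apply: eq_bigr => i _ /=.
rewrite (big_only1 i) // => [|j ji _].
  rewrite !linearZ /= op23_tensmx -scalemxAl scalerA ab1 scale1r.
  by rewrite /op12 !tensmx_mul mulmx1 !mul1mx mul_delta_mx.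
rewrite !linearZ /= op23_tensmx -scalemxAl /op12 !tensmx_mul.
by rewrite mul_delta_mx_0 // tensmx0 tens0mx !scaler0.
Qed.

Lemma tl_legs_mul12 :
  (op12 tl_bra *m op23 tl_ket) *m (op23 tl_bra *m op12 tl_ket) = op12 (e0 *t e0).
Proof.
rewrite tl_bra12_ket23 tl_bra23_ket12 /op12 mulmx_suml mx1_sum_delta tensmx_sumr.
apply: eq_bigr => i _; rewrite mulmx_sumr (big_only1 (rev_ord i)) // => [|j ji _].
  by rewrite !tensmx_mul rev_ordK !mul_delta_mx.
rewrite !tensmx_mul mul_delta_mx_0 ?tens0mx //.
by apply: contra ji => /eqP ->; rewrite rev_ordK.
Qed.

Lemma tl_legs_mul23 :
  (op23 tl_bra *m op12 tl_ket) *m (op12 tl_bra *m op23 tl_ket) = op23 (e0 *t e0).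
Proof.
rewrite tl_bra12_ket23 tl_bra23_ket12 op23_tensmx mulmx_suml mx1_sum_delta.
rewrite !tensmx_suml.
under eq_bigr => j _ do rewrite mulmx_sumr.
rewrite exchange_big; apply: eq_bigr => i _ /=.
rewrite (big_only1 (rev_ord i)) // => [|j ji _].
  by rewrite !tensmx_mul rev_ordK !mul_delta_mx.
rewrite !tensmx_mul [X in _ *t X]mul_delta_mx_0 ?tensmx0 //.
by apply: contra ji => /eqP <-; rewrite rev_ordK.
Qed.

End TemperleyLieb.

Section TemperleyLiebRelations.
Variables (R : realType) (N : nat) (a b : 'I_N -> R).
Local Notation E := (tl_gen a b).

(* For [N = 0] all the matrices involved are empty; otherwise factor through
   [e_0 (x) e_0]. *)
Lemma tl_gen_sqr : E *m E = tl_trace a b *: E.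
Proof.
case: N a b => [|n] a' b'; first by apply/matrixP => -[].
rewrite -(tl_ket_bra a' b' ord0) -mulmxA [tl_bra _ _ *m _]mulmxA tl_bra_ket.
by rewrite -scalemxAl scalemxAr mulmxA tl_ket_e0 scalemxAr.
Qed.

Hypothesis ab1 : forall i, a i * b i = 1.

Lemma tl_gen_braid12 : op12 E *m op23 E *m op12 E = op12 E.
Proof.
case: N a b ab1 => [|n] a' b' ab1'; first by apply/matrixP => -[].
rewrite -(tl_ket_bra a' b' ord0) !op12M op23M.
set K := tl_ket a' ord0; set L := tl_bra b' ord0.
transitivity (op12 K *m ((op12 L *m op23 K) *m (op23 L *m op12 K)) *m op12 L).
  by rewrite !mulmxA.
by rewrite (tl_legs_mul12 ord0 ab1') -op12M tl_ket_e0.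
Qed.

Lemma tl_gen_braid23 : op23 E *m op12 E *m op23 E = op23 E.
Proof.
case: N a b ab1 => [|n] a' b' ab1'; first by apply/matrixP => -[].
rewrite -(tl_ket_bra a' b' ord0) !op23M op12M.
set K := tl_ket a' ord0; set L := tl_bra b' ord0.
transitivity (op23 K *m ((op23 L *m op12 K) *m (op12 L *m op23 K)) *m op23 L).
  by rewrite !mulmxA.
by rewrite (tl_legs_mul23 ord0 ab1') -op23M tl_ket_e0.
Qed.

End TemperleyLiebRelations.

Section QNumbers.
Variables (R : realType) (q : R).
Hypothesis q_gt0 : 0 < q.

Lemma subr_invr_neq0 : q != 1 -> q - q^-1 != 0.
Proof.
move=> q_neq1; rewrite subr_eq0; apply: contra q_neq1 => /eqP q_inv.
have : q ^+ 2 == 1 by rewrite expr2 {2}q_inv mulfV // lt0r_neq0.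
rewrite sqrf_eq1 => /orP[//|/eqP q_m1].
by move: q_gt0; rewrite q_m1 oppr_gt0 ltr10.
Qed.

Lemma qnum_addr1 x : qnum q (x + 1) = qnum q (x - 1) + q `^ x + q `^ (- x).
Proof.
rewrite /qnum; case: eqP => [->|/eqP q_neq1]; first by rewrite !powR1; ring.
have q_neq0 := lt0r_neq0 q_gt0.
have powRD1 y : q `^ (y + 1) = q `^ y * q.
  by rewrite powRD ?q_neq0 ?implybT // powRr1 // ltW.
have powRB1 y : q `^ (y - 1) = q `^ y / q.
  by rewrite powRB ?q_neq0 ?implybT // powRr1 // ltW.
have qx_neq0 : q `^ x != 0 by rewrite lt0r_neq0 // powR_gt0.
have qq_neq1 : q * q - 1 != 0.
  apply: contra (subr_invr_neq0 q_neq1); rewrite !subr_eq0 => /eqP qq1.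
  by rewrite -[q^-1]mul1r -qq1 mulfK.
rewrite !opprD opprK powRD1 powRB1 powRD1 powRB1 !powRN.
by field; rewrite qx_neq0 q_neq0 qq_neq1.
Qed.

Lemma qnum_telescope c n :
  qnum q (2 * n%:R + c - 1) = qnum q (c - 1)
    + \sum_(0 <= i < n) (q `^ (2 * i%:R + c) + q `^ (- (2 * i%:R + c))).
Proof.
elim: n => [|n IH]; first by rewrite big_nil mulr0 add0r addr0.
rewrite big_nat_recr //= addrA -IH -[n.+1%:R]natr1.
have -> : 2 * (n%:R + 1) + c - 1 = 2 * n%:R + c + 1 by ring.
by rewrite qnum_addr1 addrA; congr (qnum q _ + _ + _); ring.
Qed.

Lemma qnum0 : qnum q 0 = 0.
Proof. by rewrite /qnum oppr0 subrr mul0r; case: ifP. Qed.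

Lemma qnum1 : qnum q 1 = 1.
Proof.
rewrite /qnum; case: eqP => // /eqP q_neq1.
by rewrite powRr1 ?ltW // powR_inv1 ?ltW // divff // subr_invr_neq0.
Qed.

Lemma qnumN x : qnum q (- x) = - qnum q x.
Proof. by rewrite /qnum opprK; case: ifP => // _; rewrite -mulNr opprB. Qed.

End QNumbers.

Section Rho.
Variable R : realType.

Lemma half_addnn n (b : bool) : ((n + n + b) %/ 2 = n)%N.
Proof. by case: b => /=; lia. Qed.

Lemma odd_addnn n (b : bool) : odd (n + n + b) = b.
Proof. by rewrite oddD addnn odd_double; case: b. Qed.

(* [N = n + n + b] with [b = odd N]; [k.+1] and [m] are partner indices,
   [k.+1 + m = N + 1]. *)
Lemma rho_rev (symp : bool) n (b : bool) k m : (symp -> b = false) ->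
  (k + m = n + n + b)%N -> (0 < m)%N ->
  rho symp (n + n + b) k.+1 = - rho symp (n + n + b) m :> R.
Proof.
move=> symp_even km m_gt0.
have kmR : k%:R + m%:R = n%:R + n%:R + b%:R :> R by rewrite -!natrD km.
rewrite /rho half_addnn odd_addnn -natr1.
case: symp symp_even => [/(_ isT) b0|_]; first subst b.
- rewrite /= mulr0n addr0 in kmR; case: ifP => k_le; case: ifP => m_le; lia || lra.
- case: b km kmR => km /= kmR; rewrite ?mulr0n ?mulr1n ?addr0 in kmR.
  + case: ifP => k_le; [|case: ifP => k_mid];
    (case: ifP => m_le; [|case: ifP => m_mid]); lia || lra.
  + case: ifP => k_le; case: ifP => m_le; lia || lra.
Qed.

Lemma epsi_rev (symp : bool) n (b : bool) k m : (symp -> b = false) ->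
  (k + m = n + n + b)%N -> (0 < m)%N ->
  epsi symp (n + n + b) k.+1 * epsi symp (n + n + b) m = epsR symp :> R.
Proof.
move=> symp_even km m_gt0; rewrite /epsi /epsR half_addnn.
case: symp symp_even => [/(_ isT) b0|_]; last by rewrite mulr1.
by subst b; case: ifP => k_le; case: ifP => m_le; lia || rewrite ?mul1r ?mulr1.
Qed.

Lemma big_nat_halves (V : nmodType) (F : nat -> V) n :
  \sum_(0 <= i < n + n) F i
  = \sum_(0 <= i < n) F (n - i.+1)%N + \sum_(0 <= i < n) F (n + i)%N.
Proof.
rewrite (@big_cat_nat _ _ _ n) ?leq_addr //; congr (_ + _).
  by rewrite big_nat_rev /= add0n.
rewrite -{1}[n]add0n big_addn addnK; apply: eq_bigr => i _; by rewrite addnC.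
Qed.

Lemma big_nat_halves_mid (V : nmodType) (F : nat -> V) n :
  \sum_(0 <= i < n + n + 1) F i
  = \sum_(0 <= i < n) F (n - i.+1)%N + F n + \sum_(0 <= i < n) F (n + 1 + i)%N.
Proof.
rewrite (@big_cat_nat _ _ _ n) //; last by lia.
rewrite (@big_cat_nat _ _ _ n.+1 n) //=; last by lia.
rewrite big_nat1 addrA; congr (_ + _ + _); first by rewrite big_nat_rev /= add0n.
rewrite -{1}[n.+1]add0n big_addn (_ : n + n + 1 - n.+1 = n)%N; last by lia.
by apply: eq_bigr => i _; congr F; lia.
Qed.

Lemma natr_rev_succ n i : (i < n)%N -> (n - i.+1).+1%:R = n%:R - i%:R :> R.
Proof. by move=> i_lt; rewrite subnSK // natrB // ltnW. Qed.

(* In each of the three cases [2 rho] runs over [+-(2i + c)], [i < n], with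
   [c = 2, 0, 1], plus a middle [rho = 0] when [N] is odd. *)
Lemma sum_powR_rho_symp (q : R) n :
  \sum_(0 <= k < n + n) q `^ (2 * rho true (n + n) k.+1)
  = \sum_(0 <= i < n) (q `^ (2 * i%:R + 2) + q `^ (- (2 * i%:R + 2))).
Proof.
rewrite big_nat_halves big_split /=.
have := half_addnn n false; rewrite addn0 => half.
congr (_ + _); apply: eq_big_nat => i /andP[_ i_lt]; congr (q `^ _).
all: rewrite /rho half.
- by rewrite ifT ?natr_rev_succ //; [lra | lia].
- by rewrite ifF -?addnS ?natrD -?natr1; [lra | lia].
Qed.

Lemma sum_powR_rho_even (q : R) n :
  \sum_(0 <= k < n + n) q `^ (2 * rho false (n + n) k.+1)
  = \sum_(0 <= i < n) (q `^ (2 * i%:R + 0) + q `^ (- (2 * i%:R + 0))).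
Proof.
rewrite big_nat_halves big_split /=.
have := half_addnn n false; have := odd_addnn n false; rewrite addn0 => odd half.
congr (_ + _); apply: eq_big_nat => i /andP[_ i_lt]; congr (q `^ _).
  by rewrite /rho half odd ifT ?natr_rev_succ //; [lra | lia].
by rewrite /rho half odd ifF -?addnS ?natrD -?natr1; [lra | lia].
Qed.

Lemma sum_powR_rho_odd (q : R) n :
  \sum_(0 <= k < n + n + 1) q `^ (2 * rho false (n + n + 1) k.+1)
  = \sum_(0 <= i < n) (q `^ (2 * i%:R + 1) + q `^ (- (2 * i%:R + 1))) + 1.
Proof.
have half := half_addnn n true; have odd := odd_addnn n true.
have rho_mid : rho false (n + n + 1) n.+1 = 0 :> R.
  by rewrite /rho half odd ltnn eqxx.
rewrite big_nat_halves_mid big_split addrAC rho_mid mulr0 powRr0.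
congr (_ + _ + _);
  apply: eq_big_nat => i /andP[_ i_lt]; congr (q `^ _); rewrite /rho half odd.
  by rewrite ifT ?natr_rev_succ //; [lra | lia].
rewrite ifF; last by lia.
rewrite ifF; last by apply/eqP; lia.
by rewrite (_ : (n + 1 + i).+1 = n + i + 2)%N ?natrD; [lra | lia].
Qed.

End Rho.

Section Weights.
Variables (R : realType) (symp : bool) (N : nat) (q : R).
Hypothesis q_gt0 : 0 < q.

Definition rho_wt (i : 'I_N) : R := q `^ rho symp N i.+1 * epsi symp N i.+1.
Definition rho_cowt (i : 'I_N) : R := q `^ (- rho symp N i.+1) * epsi symp N i.+1.

Lemma rho_wt_mul_cowt i : rho_wt i * rho_cowt i = 1.
Proof.
have epsi_sqr : epsi symp N i.+1 ^+ 2 = 1 :> R.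
  by rewrite /epsi; case: symp; [case: ifP => _|]; rewrite ?sqrrN expr1n.
rewrite /rho_wt /rho_cowt mulrACA -expr2 epsi_sqr mulr1 powRN.
by rewrite mulfV // lt0r_neq0 // powR_gt0.
Qed.

Lemma P0_tl_gen : P0 symp N q = dconst symp N q *: tl_gen rho_wt rho_cowt.
Proof.
rewrite /P0 /tl_gen; congr (_ *: _); apply: eq_bigr => i _; apply: eq_bigr => j _.
by rewrite /rho_wt /rho_cowt powRD ?lt0r_neq0 ?implybT //; congr (_ *: _); ring.
Qed.

End Weights.

Arguments rho_wt {R} symp N q i.
Arguments rho_cowt {R} symp N q i.

Section Trace.
Variable R : realType.

Lemma rho_wt_mul_rev (symp : bool) n (b : bool) (q : R) k :
  (symp -> b = false) -> 0 < q -> (k < n + n + b)%N ->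
  let N := (n + n + b)%N in
  q `^ rho symp N k.+1 * epsi symp N k.+1
    * (q `^ (- rho symp N (N - k.+1).+1) * epsi symp N (N - k.+1).+1)
  = epsR symp * q `^ (2 * rho symp N k.+1).
Proof.
move=> symp_even q_gt0 k_lt N.
have km : (k + (N - k.+1).+1 = N)%N by rewrite /N; lia.
rewrite -[rho symp N (N - k.+1).+1]opprK -(rho_rev R symp_even km) // opprK.
rewrite mulrACA (epsi_rev R symp_even km) //.
by rewrite -powRD ?lt0r_neq0 ?implybT // mulrC; congr (_ * q `^ _); ring.
Qed.

Lemma tl_trace_rho_wt (symp : bool) N (q : R) :
  (symp -> ~~ odd N) -> 0 < q ->
  tl_trace (rho_wt symp N q) (rho_cowt symp N q)
  = 1 + epsR symp * qnum q (N%:R - epsR symp).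
Proof.
move=> symp_even q_gt0; rewrite /tl_trace /rho_wt /rho_cowt /=.
rewrite -(big_mkord xpredT (fun k => q `^ rho symp N k.+1 * epsi symp N k.+1
    * (q `^ (- rho symp N (N - k.+1).+1) * epsi symp N (N - k.+1).+1))).
have {symp_even} symp_b : symp -> odd N = false by move=> /symp_even/negbTE.
have -> : N = (N./2 + N./2 + odd N)%N by rewrite addnn addnC odd_double_half.
move: (N./2) (odd N) symp_b => n b symp_b.
rewrite (eq_big_nat _ _ (fun k k_lt => rho_wt_mul_rev symp_b q_gt0 (andP k_lt).2)).
rewrite -mulr_sumr; case: symp symp_b => [/(_ isT) ->|_].
- rewrite addn0 sum_powR_rho_symp /epsR.
  rewrite (_ : _ - -1 = 2 * n%:R + 2 - 1); last by rewrite natrD; ring.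
  by rewrite qnum_telescope // (_ : 2 - 1 = 1) ?qnum1 //; ring.
- rewrite /epsR mul1r; case: b.
  + rewrite sum_powR_rho_odd (_ : _ - 1 = 2 * n%:R + 1 - 1); last first.
      by rewrite /= !natrD; ring.
    by rewrite qnum_telescope // subrr qnum0; ring.
  + rewrite addn0 sum_powR_rho_even (_ : _ - 1 = 2 * n%:R + 0 - 1); last first.
      by rewrite natrD; ring.
    by rewrite qnum_telescope // sub0r qnumN // qnum1 //; ring.
Qed.

End Trace.

Theorem mainTheorem7 (R : realType) (symp : bool) (N : nat) (q eta : R) :
  (2 <= N)%N ->
  (symp -> ~~ odd N) ->
  0 < q ->
  1 + epsR symp * qnum q (N%:R - epsR symp) != 0 ->
  0 < 1 - 4 * (dconst symp N q) ^+ 2 < 1 ->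
  0 < eta ->
  tanh eta = Num.sqrt (1 - 4 * (dconst symp N q) ^+ 2) ->
  [/\ forall theta theta' : R,
        eta + theta != 0 -> eta + theta' != 0 -> eta + theta + theta' != 0 ->
        op12 (Rhat symp N q eta theta) *m op23 (Rhat symp N q eta (theta + theta'))
          *m op12 (Rhat symp N q eta theta')
        = op23 (Rhat symp N q eta theta') *m op12 (Rhat symp N q eta (theta + theta'))
          *m op23 (Rhat symp N q eta theta),
      forall theta : R, eta + theta != 0 -> eta - theta != 0 ->
        Rhat symp N q eta theta *m Rhat symp N q eta (- theta) = 1%:M
    & forall theta theta' : R,
        eta + theta != 0 -> eta + theta' != 0 -> eta + theta + theta' != 0 ->
        wfun eta (theta + theta')
        = (wfun eta theta + wfun eta theta' + wfun eta theta * wfun eta theta')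
          / (1 - (dconst symp N q) ^+ 2 * wfun eta theta * wfun eta theta')].
Proof.
move=> _ symp_even q_gt0 trace_neq0 /andP[disc_gt0 _] eta_gt0 tanh_eta.
set d := dconst symp N q in disc_gt0 tanh_eta *; set P := P0 symp N q.
have ab1 := @rho_wt_mul_cowt R symp N q q_gt0.
have P_tl : P = d *: tl_gen (rho_wt symp N q) (rho_cowt symp N q).
  exact: P0_tl_gen.
have d_trace : d * tl_trace (rho_wt symp N q) (rho_cowt symp N q) = 1.
  by rewrite tl_trace_rho_wt // mulVf.
have P_idem : P *m P = P.
  by rewrite P_tl -scalemxAl -scalemxAr tl_gen_sqr !scalerA -mulrA d_trace mulr1.
have P_braid12 : op12 P *m op23 P *m op12 P = d ^+ 2 *: op12 P.
  by rewrite P_tl !linearZ /= -!scalemxAl tl_gen_braid12 // !scalerA expr2 mulrA.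
have P_braid23 : op23 P *m op12 P *m op23 P = d ^+ 2 *: op23 P.
  by rewrite P_tl !linearZ /= -!scalemxAl tl_gen_braid23 // !scalerA expr2 mulrA.
have w_add := wfun_add eta_gt0 (sqr_of_tanh (ltW disc_gt0) tanh_eta).
have Rhat12 t : op12 (Rhat symp N q eta t) = 1%:M + wfun eta t *: op12 P.
  by rewrite /Rhat linearD linearZ /= op12_1.
have Rhat23 t : op23 (Rhat symp N q eta t) = 1%:M + wfun eta t *: op23 P.
  by rewrite /Rhat linearD linearZ /= op23_1.
split=> [t t' nz_t nz_t' nz_tt'|t nz_t nz_mt|t t' nz_t nz_t' nz_tt'].
- rewrite !Rhat12 !Rhat23.
  apply: (yang_baxter_idem (d2 := d ^+ 2)); rewrite -?op12M -?op23M ?P_idem //.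
  by have [_ <-] := w_add t t' nz_t nz_t' nz_tt'; ring.
- by rewrite mulmx_idem_add_scale // wfun_addN // scale0r addr0.
- by have [den_neq0 <-] := w_add t t' nz_t nz_t' nz_tt'; rewrite mulfK.
Qed.
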